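(* Let $u$ and $v$ be vertices of $G$ such that $u$ is neither an ancestor nor a descendant of $v$. Suppose the set $X$ of Case 3 of the routing algorithm (the vertices of $C_{T^u}$ that are ancestors of $v$ and not ancestors of $u$) is empty. Then the vertices visited when executing the routing steps of Case 3 a) lie on the path in $T$ from $u$ to $v$, and they are visited in the order in which they appear on this path.
   Context: Let $T$ be a rooted tree on $n$ vertices with positive edge weights; $P(a,b)$ is the path in $T$ from $a$ to $b$ and $\delta_T(a,b)$ its weight. Ancestor/descendant refer to $T$, and a vertex counts as its own ancestor and descendant; ''deepest''/''highest'' refer to depth in $T$. $T_v$ is the subtree of $T$ rooted at $v$. For every non-leaf vertex $v$ fix a child $c_1(v)$ with $|T_{c_1(v)}|$ maximal; edges $(v,c_1(v))$ are leftmost. A subtree $R$ of $T$ is rooted at its vertex closest to the root, $rt(R)$, and inherits the leftmost labelling; $R_v$ is the subtree of $R$ rooted at $v$. $P_R(v)$ is the longest downward path from $v$ in $R$ using only leftmost edges, with last vertex $l(v)$; $l(R):=l(rt(R))$. A vertex $v$ of $R$ is $d$-balanced if $|R_{c_1(v)}|\le |R|-d$ (with $|R_{c_1(v)}|=0$ if $c_1(v)$ is undefined or not in $R$); $b_d(v)$ is the first $d$-balanced vertex on $P_R(v)$, or NULL. $CV(R,d)=\emptyset$ if $b_d(rt(R))$ is NULL, else $\{b\}\cup\bigcup_w CV(R_w,d)$ with $b=b_d(rt(R))$ and $w$ ranging over children of $b$ in $R$. Fix an integer $k\ge4$; for a subtree $R$ with $m$ vertices, $C_R=V(R)$ if $k\ge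 m/2-1$, else $C_R=CV(R,m/k)\cup\{l(R),rt(R)\}$. Canonical subtrees: $T$ is canonical; if $R$ is canonical, each component of $R$ minus $C_R$ is canonical. Each vertex $v$ lies in $C_R$ for exactly one canonical $R$, denoted $T^v$. The spanner $G$ has vertex set $V(T)$ and edges: all edges of $T$, and all pairs of distinct vertices of $C_R$ for every canonical $R$; edge $(a,b)$ has weight $\delta_T(a,b)$. Routing algorithm from current vertex $u$ to destination $v$: Case 0: if $v$ is adjacent to $u$, move to $v$. Case 1: $u$ is an ancestor of $v$; let $X$ be the vertices of $C_{T^u}$ that are ancestors of $v$, $x$ the deepest; move to $x$, then to the child of $x$ that is an ancestor of $v$. Case 2: $u$ is a descendant of $v$; let $X$ be the vertices of $C_{T^u}$ that are descendants of $v$ and ancestors of $u$, $x$ the highest; move to $x$, then to the parent of $x$. Case 3: $u$ is neither; let $X$ be the vertices of $C_{T^u}$ that are ancestors of $v$ but not of $u$, and $Y$ those that are ancestors of $u$ but not of $v$, $y$ the highest vertex of $Y$. Case 3 a): $X=\emptyset$: move to $y$, then to the parent of $y$. Case 3 b): $X\neq\emptyset$: with $x$ the deepest vertex of $X$ and $x'$ the child of $x$ that is an ancestor of $v$, move to $x$, then to $x'$. (Moving to the current vertex means staying.) *)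

From mathcomp Require Import all_boot.
Set Implicit Arguments. Unset Strict Implicit. Unset Printing Implicit Defensive.

Section Spanner.
Variable V : finType.
(* parent function; the root r satisfies par r = r *)
Variable par : V -> V.
(* leftmost child c1(v); None iff v is a leaf *)
Variable c1 : V -> option V.
Variable k : nat.

Definition anc (a x : V) : bool := fconnect par x a.

Definition subtreeT (v : V) : {set V} := [set x | anc v x].

Definition tadj : rel V := fun x y => (x != y) && ((par x == y) || (par y == x)).

Definition on_path (x y z : V) : bool :=
  (anc z x || anc z y) && [forall w, (anc w x && anc w y) ==> anc w z].

(* connected component of x in the subgraph of T induced by S *)
Definition comp (S : {set V}) (x : V) : {set V} :=
  [set y in S | [forall z, on_path x y z ==> (z \in S)]].

(* root of a subtree R: its vertex closest to the root of T (r0 if R empty) *)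
Definition rt (r0 : V) (R : {set V}) : V :=
  odflt r0 [pick x in R | [forall y in R, anc x y]].

Definition Rsub (R : {set V}) (v : V) : {set V} := [set x in R | anc v x].

(* one step along leftmost edges inside R (stays put when impossible) *)
Definition lstep (R : {set V}) (x : V) : V :=
  match c1 x with Some c => if c \in R then c else x | None => x end.

(* P_R(v) as a sequence of vertices, and its last vertex l(v) *)
Definition Ppath (R : {set V}) (v : V) : seq V :=
  undup (traject (lstep R) v #|V|.+1).
Definition lR (R : {set V}) (v : V) : V := iter #|V| (lstep R) v.

(* v is d-balanced in R, for d = m / k (rational):
   |R_{c1 v}| <= |R| - m/k  <->  k * |R_{c1 v}| + m <= k * |R| *)
Definition balanced (m : nat) (R : {set V}) (v : V) : bool :=
  let s := match c1 v with
           | Some c => if c \in R then #|Rsub R c| else 0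
           | None => 0 end in
  k * s + m <= k * #|R|.

Definition bd (m : nat) (R : {set V}) (v : V) : option V :=
  ohead [seq x <- Ppath R v | balanced m R x].

(* CV(R, m/k), computed with fuel (fuel #|V|.+1 always suffices, since the
   size of the subtree strictly decreases at each recursive call) *)
Fixpoint CVf (r0 : V) (m : nat) (fuel : nat) (R : {set V}) : {set V} :=
  match fuel with
  | 0 => set0
  | f.+1 =>
    match bd m R (rt r0 R) with
    | None => set0
    | Some b => b |: \bigcup_(w in [set w in R | (w != b) && (par w == b)])
                       CVf r0 m f (Rsub R w)
    end
  end.

Definition CV (r0 : V) (m : nat) (R : {set V}) : {set V} := CVf r0 m #|V|.+1 R.

Definition Cset (r0 : V) (R : {set V}) : {set V} :=
  let m := #|R| in
  if m <= k.*2 + 2 (* i.e. k >= m/2 - 1 *) then R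
  else CV r0 (m) R :|: [set lR R (rt r0 R); rt r0 R].

Inductive canonical (r0 : V) : {set V} -> Prop :=
| canT : canonical r0 [set: V]
| canComp R x : canonical r0 R -> x \in R :\: Cset r0 R ->
                canonical r0 (comp (R :\: Cset r0 R) x).

End Spanner.

Definition rooted_tree (V : finType) (par : V -> V) (r : V) : Prop :=
  par r = r /\ forall x, anc par r x.

Definition leftmost_choice (V : finType) (par : V -> V) (c1 : V -> option V) : Prop :=
  forall v, match c1 v with
            | None => forall c, par c = v -> c = v
            | Some c => par c = v /\ c <> v /\
                forall c', par c' = v -> c' <> v ->
                  #|subtreeT par c'| <= #|subtreeT par c|
            end.

From mathcomp Require Import all_boot.

Set Implicit Arguments.
Unset Strict Implicit.
Unset Printing Implicit Defensive.

(* The moves of Case 3 a) go u -> y -> par y, where y is an ancestor of u but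
   not of v.  A walk along tree edges that starts in the subtree T_y and ends
   outside it must cross the only edge leaving T_y, namely (y, par y), so y and
   then par y occur on P(u, v) in this order. *)

Section TreePath.
Variables (V : finType) (par : V -> V).

Lemma anc_par_of_ne (a x : V) : anc par a x -> a != x -> anc par a (par x).
Proof. by rewrite /anc fconnect_eqVf eq_sym => /orP [/eqP -> /eqP |]. Qed.

Lemma anc_of_par (a x : V) : anc par a (par x) -> anc par a x.
Proof. exact: connect_trans (fconnect1 par x). Qed.

Lemma anc_tadj_next (a u w : V) :
  anc par a u -> tadj par u w -> (a = u /\ par u = w) \/ anc par a w.
Proof.
move=> a_u /andP [_ /orP [] /eqP edge]; last first.
  by right; apply: anc_of_par; rewrite edge.
have [-> | ne_au] := eqVneq a u; first by left.
by right; rewrite -edge; apply: anc_par_of_ne.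
Qed.

Lemma tadj_path_exits_subtree (a u : V) (p : seq V) :
  path (tadj par) u p -> uniq (u :: p) ->
  anc par a u -> ~~ anc par a (last u p) ->
  [/\ a \in u :: p, par a \in u :: p
    & index a (u :: p) < index (par a) (u :: p)].
Proof.
elim: p u => [|w p IH] u /=; first by move=> _ _ ->.
case/andP=> uw path_w /andP [u_notin uniq_w] a_u a_nend.
case: (anc_tadj_next a_u uw) => [[-> edge] | a_w].
  by move: uw; rewrite /tadj edge !inE !eqxx orbT /= => /andP [/negbTE ->].
have [a_in pa_in lt_w] := IH w path_w uniq_w a_w a_nend.
have u_ne b : b \in w :: p -> (u == b) = false.
  by move=> b_in; apply/negbTE; apply: contra u_notin => /eqP ->.
by rewrite /= (u_ne _ a_in) (u_ne _ pa_in) !(in_cons u) a_in pa_in !orbT.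
Qed.

End TreePath.

Theorem lemma10 (V : finType) (par : V -> V) (r : V) (c1 : V -> option V)
    (k : nat) :
  rooted_tree par r -> leftmost_choice par c1 -> 4 <= k ->
  forall (u v : V), ~~ anc par u v -> ~~ anc par v u ->
  forall R : {set V}, canonical par c1 k r R -> u \in Cset par c1 k r R ->
  (* T^u = R; X is empty *)
  [set x in Cset par c1 k r R | anc par x v && ~~ anc par x u] = set0 ->
  (* y is the highest vertex of Y *)
  forall y : V,
    y \in [set x in Cset par c1 k r R | anc par x u && ~~ anc par x v] ->
    (forall x, x \in [set x in Cset par c1 k r R | anc par x u && ~~ anc par x v] ->
       anc par y x) ->
  (* P(u,v) is the (unique) simple path u :: p from u to v in T *)
  forall p : seq V, path (tadj par) u p -> last u p = v -> uniq (u :: p) ->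
    [/\ y \in u :: p, par y \in u :: p &
        index u (u :: p) <= index y (u :: p) < index (par y) (u :: p)].
Proof.
move=> _ _ _ u v _ _ R _ _ _ y y_Y _ p path_up last_up uniq_up.
move: y_Y; rewrite inE => /and3P [_ y_u y_nv].
have y_nlast : ~~ anc par y (last u p) by rewrite last_up.
have [y_in py_in lt_y] := tadj_path_exits_subtree path_up uniq_up y_u y_nlast.
by split=> //; rewrite /= eqxx.
Qed.
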